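(* Let $G$ be a bipartite instance, let $(u,v)\in E$ with $u$'s deadline earlier than $v$'s, and fix the ranks $\mathbf y_{-uv}$ of all vertices other than $u,v$. Let $\tau$ be the marginal rank of $u$ w.r.t. $\mathbf y_{-uv}$ in $G-\{v\}$ and, for $y_u\in[0,1]$, let $\theta(y_u)$ be the marginal rank of $v$ in $G$ w.r.t. the ranks $(y_u,\mathbf y_{-uv})$. Then there exists $\theta\in[0,1]$ such that $\theta(y_u)=\theta$ for all $y_u>\tau$.
   Context: Fully online matching model on a graph $G=(V,E)$: each step is the arrival or the deadline of a vertex; at arrival, edges to previously arrived vertices are revealed; every neighbor of $v$ arrives before $v$'s deadline; at a vertex's deadline, if unmatched, it is irrevocably matched to an unmatched neighbor or left unmatched. Ranking: each vertex $w$ has a rank $y_w\in[0,1)$; at the deadline of an unmatched vertex $w$, if it has unmatched neighbors it is matched to the unmatched neighbor of minimum rank. If an edge $(a,b)$ is matched at $a$'s deadline, $a$ is called active and $b$ passive. Marginal rank: for a vertex $w$ in a graph $H$ and fixed ranks of all other vertices of $H$, the marginal rank of $w$ is the largest value $\theta\in[0,1]$ such that $w$ is passive in the matching produced by Ranking on $H$ when $y_w=\theta^-$ (rank infinitesimally below $\theta$); it equals $0$ if no such value exists. *)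

From Stdlib Require Import Reals Lra Lia List Arith Bool.
Import ListNotations.
Open Scope R_scope.

(** Events of the fully online model: arrival or deadline of a vertex (vertices are nats). *)
Inductive event : Type := Arr (x : nat) | Dl (x : nat).

Definition event_eqb (e1 e2 : event) : bool :=
  match e1, e2 with
  | Arr a, Arr b => Nat.eqb a b
  | Dl a, Dl b => Nat.eqb a b
  | _, _ => false
  end.

Record instance : Type := Instance { adj : nat -> nat -> bool; events : list event }.

Definition before (G : instance) (e1 e2 : event) : Prop :=
  exists i j, (i < j)%nat /\ nth_error (events G) i = Some e1 /\ nth_error (events G) j = Some e2.

Definition is_vertex (G : instance) (x : nat) : Prop := In (Arr x) (events G).

Definition valid_instance (G : instance) : Prop :=
  NoDup (events G) /\
  (forall x, In (Arr x) (events G) <-> In (Dl x) (events G)) /\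
  (forall x, is_vertex G x -> before G (Arr x) (Dl x)) /\
  (forall a b, adj G a b = adj G b a) /\
  (forall a, adj G a a = false) /\
  (forall a b, adj G a b = true -> is_vertex G a) /\
  (forall a b, adj G a b = true -> before G (Arr a) (Dl b)).

Definition bipartite (G : instance) : Prop :=
  exists side : nat -> bool, forall a b, adj G a b = true -> side a <> side b.

Definition remove_vertex (G : instance) (v : nat) : instance :=
  Instance (fun a b => adj G a b && negb (Nat.eqb a v) && negb (Nat.eqb b v))
           (filter (fun e => negb (event_eqb e (Arr v)) && negb (event_eqb e (Dl v))) (events G)).

Definition verts (G : instance) : list nat :=
  flat_map (fun e => match e with Arr x => [x] | Dl _ => [] end) (events G).

(** vertex of minimum rank in a list (ties broken towards the earlier element) *)
Fixpoint argmin (y : nat -> R) (l : list nat) : option nat :=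
  match l with
  | [] => None
  | x :: l' =>
      match argmin y l' with
      | None => Some x
      | Some z => if Rle_dec (y x) (y z) then Some x else Some z
      end
  end.

(** matching state: list of matched edges (active, passive) *)
Definition matched (s : list (nat * nat)) (x : nat) : bool :=
  existsb (fun p => Nat.eqb (fst p) x || Nat.eqb (snd p) x) s.

Definition ranking_step (G : instance) (y : nat -> R) (s : list (nat * nat)) (e : event)
  : list (nat * nat) :=
  match e with
  | Arr _ => s
  | Dl w =>
      if matched s w then s else
      match argmin y (filter (fun x => adj G w x && negb (matched s x)) (verts G)) with
      | None => s
      | Some x => s ++ [(w, x)]
      end
  end.

Definition ranking (G : instance) (y : nat -> R) : list (nat * nat) :=
  fold_left (ranking_step G y) (events G) [].

Definition passive (G : instance) (y : nat -> R) (w : nat) : Prop :=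
  exists a, In (a, w) (ranking G y).

Definition upd (y : nat -> R) (w : nat) (t : R) : nat -> R :=
  fun x => if Nat.eqb x w then t else y x.

(** w is passive when y_w = theta^- (all ranks in a left neighbourhood of theta) *)
Definition passive_at_minus (G : instance) (y : nat -> R) (w : nat) (theta : R) : Prop :=
  exists eps, 0 < eps /\
    forall t, theta - eps < t < theta -> passive G (upd y w t) w.

Definition is_marginal_rank (G : instance) (y : nat -> R) (w : nat) (theta : R) : Prop :=
  (0 <= theta <= 1 /\ passive_at_minus G y w theta /\
     forall th, 0 <= th <= 1 -> passive_at_minus G y w th -> th <= theta)
  \/
  ((forall th, 0 <= th <= 1 -> ~ passive_at_minus G y w th) /\ theta = 0).

(* For y_u > tau, u is never passive when Ranking runs on G - v. Couple the runs of
   Ranking on G and on G - v with the same ranks except v's: while v is unmatched, every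
   deadline other than v's picks in G either v itself or the vertex picked in G - v.
   Hence, until v is matched, u is never picked in G, and since changing y_u can only move
   a minimum onto or off u, the run of G does not depend on y_u. Once v's deadline has
   passed with v unmatched, v can never become passive. So, for every rank of v, whether v
   ends up passive is the same for all y_u in (tau, 1], and so is its marginal rank. *)

From Stdlib Require Import Reals List Lra Arith Bool Classical.
Import ListNotations.
Open Scope R_scope.

Lemma argmin_In y l z : argmin y l = Some z -> In z l.
Proof.
  induction l as [|x l IH]; simpl; [discriminate|].
  destruct (argmin y l) as [z'|]; [destruct Rle_dec|]; intros H; injection H as <-; auto.
Qed.

Lemma argmin_None y l : argmin y l = None -> l = [].
Proof.
  destruct l as [|x l]; simpl; auto.
  destruct (argmin y l); [destruct Rle_dec|]; discriminate.
Qed.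

Lemma argmin_le y l z : argmin y l = Some z -> forall w, In w l -> y z <= y w.
Proof.
  revert z; induction l as [|x l IH]; simpl; intros z; [discriminate|].
  destruct (argmin y l) as [z'|] eqn:E.
  - specialize (IH z' eq_refl).
    destruct (Rle_dec (y x) (y z')); intros H; injection H as <-;
      intros w [<-|Hw]; try lra; specialize (IH w Hw); lra.
  - intros H; injection H as <-. rewrite (argmin_None _ _ E).
    intros w [<-|[]]; lra.
Qed.

Lemma argmin_ext y1 y2 l :
  (forall x, In x l -> y1 x = y2 x) -> argmin y1 l = argmin y2 l.
Proof.
  induction l as [|x l IH]; simpl; intros H; auto.
  rewrite IH by auto.
  destruct (argmin y2 l) as [z|] eqn:E; auto.
  rewrite (H x (or_introl eq_refl)), (H z (or_intror (argmin_In _ _ _ E))).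
  reflexivity.
Qed.

Lemma argmin_lower w y1 y2 l :
  (forall x, x <> w -> y1 x = y2 x) -> y2 w <= y1 w ->
  argmin y2 l = Some w \/ argmin y2 l = argmin y1 l.
Proof.
  intros Hoff Hw.
  induction l as [|x l IH]; simpl; auto.
  destruct IH as [IH|IH]; rewrite IH.
  - destruct (Rle_dec (y2 x) (y2 w)) as [Hxw|Hxw]; [|left; reflexivity].
    destruct (Nat.eq_dec x w) as [->|Hx]; [left; reflexivity|right].
    destruct (argmin y1 l) as [z|] eqn:E1; auto.
    destruct (Rle_dec (y1 x) (y1 z)) as [Hxz|Hxz]; auto. exfalso.
    pose proof (argmin_le _ _ _ IH z (argmin_In _ _ _ E1)).
    rewrite (Hoff x Hx) in Hxz.
    destruct (Nat.eq_dec z w) as [->|Hz]; [lra|]. rewrite (Hoff z Hz) in Hxz. lra.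
  - destruct (argmin y1 l) as [z|] eqn:E1; auto.
    destruct (Rle_dec (y2 x) (y2 z)) as [r|r], (Rle_dec (y1 x) (y1 z)) as [r'|r']; auto.
    + destruct (Nat.eq_dec x w) as [->|Hx]; [left; reflexivity|exfalso].
      rewrite (Hoff x Hx) in r'.
      destruct (Nat.eq_dec z w) as [->|Hz]; [lra|]. rewrite (Hoff z Hz) in r'. lra.
    + destruct (Nat.eq_dec z w) as [->|Hz]; [left; reflexivity|exfalso].
      rewrite (Hoff z Hz) in r'.
      destruct (Nat.eq_dec x w) as [->|Hx]; [lra|]. rewrite (Hoff x Hx) in r'. lra.
Qed.

Lemma argmin_agree_off w y1 y2 l :
  (forall x, x <> w -> y1 x = y2 x) ->
  argmin y1 l <> Some w -> argmin y2 l <> Some w -> argmin y1 l = argmin y2 l.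
Proof.
  intros Hoff H1 H2.
  destruct (Rle_dec (y2 w) (y1 w)).
  - destruct (argmin_lower w y1 y2 l Hoff) as [E|E]; congruence.
  - assert (Hoff' : forall x, x <> w -> y2 x = y1 x) by (intros; symmetry; auto).
    destruct (argmin_lower w y2 y1 l Hoff') as [E|E]; [lra|congruence|congruence].
Qed.

Lemma argmin_filter_neq v y l :
  argmin y l = Some v \/ argmin y l = argmin y (filter (fun x => negb (x =? v)) l).
Proof.
  induction l as [|x l IH]; simpl; auto.
  destruct (x =? v) eqn:Ex; simpl.
  - apply Nat.eqb_eq in Ex; subst x.
    destruct (argmin y l) as [z|] eqn:E; [|left; reflexivity].
    destruct (Rle_dec (y v) (y z)); [left; reflexivity|].
    destruct IH as [IH|IH]; [injection IH as ->; lra|right; exact IH].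
  - destruct IH as [IH|IH]; rewrite IH; [|right; reflexivity].
    destruct (Rle_dec (y x) (y v)) as [r|r]; [right|left; reflexivity].
    destruct (argmin y (filter (fun x0 => negb (x0 =? v)) l)) as [z|] eqn:E; auto.
    destruct (Rle_dec (y x) (y z)) as [r'|r']; auto. exfalso.
    apply argmin_In, filter_In in E as [E _].
    pose proof (argmin_le _ _ _ IH z E). lra.
Qed.

Lemma upd_eq y w t : upd y w t w = t.
Proof. unfold upd; rewrite Nat.eqb_refl; reflexivity. Qed.

Lemma upd_neq y w t x : x <> w -> upd y w t x = y x.
Proof. unfold upd; intros H; apply Nat.eqb_neq in H; rewrite H; reflexivity. Qed.

Definition candidates (G : instance) (s : list (nat * nat)) (w : nat) : list nat :=
  filter (fun x => adj G w x && negb (matched s x)) (verts G).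

Definition passive_in (s : list (nat * nat)) (w : nat) : Prop := exists a, In (a, w) s.

Lemma ranking_step_Dl G y s w :
  ranking_step G y s (Dl w) =
  if matched s w then s else
  match argmin y (candidates G s w) with None => s | Some x => s ++ [(w, x)] end.
Proof. reflexivity. Qed.

Lemma candidates_spec G s w x :
  In x (candidates G s w) <-> In x (verts G) /\ adj G w x = true /\ matched s x = false.
Proof.
  unfold candidates; rewrite filter_In, andb_true_iff, negb_true_iff; tauto.
Qed.

Lemma matched_app s s' x : matched s x = true -> matched (s ++ s') x = true.
Proof. unfold matched; rewrite existsb_app; intros ->; reflexivity. Qed.

Lemma matched_passive_in s a w : In (a, w) s -> matched s w = true.
Proof.
  intros H; apply existsb_exists; exists (a, w); split; [exact H|].
  simpl; rewrite Nat.eqb_refl, orb_true_r; reflexivity.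
Qed.

Lemma ranking_step_incl G y s e : incl s (ranking_step G y s e).
Proof.
  destruct e as [x|x]; [apply incl_refl|rewrite ranking_step_Dl].
  destruct (matched s x); [apply incl_refl|].
  destruct argmin; [apply incl_appl, incl_refl|apply incl_refl].
Qed.

Lemma ranking_fold_incl G y l s : incl s (fold_left (ranking_step G y) l s).
Proof.
  revert s; induction l as [|e l IH]; simpl; intros s; [apply incl_refl|].
  eapply incl_tran; [apply ranking_step_incl|apply IH].
Qed.

Lemma passive_in_fold G y l s w :
  passive_in s w -> passive_in (fold_left (ranking_step G y) l s) w.
Proof. intros [a Ha]; exists a; apply ranking_fold_incl, Ha. Qed.

Lemma passive_in_fold_chosen G y l s x w :
  matched s x = false -> argmin y (candidates G s x) = Some w ->
  passive_in (fold_left (ranking_step G y) l (ranking_step G y s (Dl x))) w.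
Proof.
  intros Hx Hw; apply passive_in_fold.
  rewrite ranking_step_Dl, Hx, Hw; exists x; apply in_or_app; right; left; reflexivity.
Qed.

(* At each deadline the choice is unchanged or becomes [w] (argmin_lower). *)
Lemma passive_in_fold_lower G w y1 y2 :
  (forall x, x <> w -> y1 x = y2 x) -> y2 w <= y1 w ->
  forall l s, passive_in (fold_left (ranking_step G y1) l s) w ->
              passive_in (fold_left (ranking_step G y2) l s) w.
Proof.
  intros Hoff Hw l; induction l as [|[x|x] l IH]; cbn [fold_left]; intros s H; auto.
  destruct (matched s x) eqn:Hx.
  { rewrite ranking_step_Dl, Hx in *; auto. }
  destruct (argmin_lower w y1 y2 (candidates G s x) Hoff Hw) as [E|E].
  - exact (passive_in_fold_chosen G y2 l s x w Hx E).
  - rewrite ranking_step_Dl, Hx, E in *; auto.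
Qed.

Lemma passive_upd_le H z w t1 t2 :
  passive H (upd z w t1) w -> t2 <= t1 -> passive H (upd z w t2) w.
Proof.
  intros Hp Hle; apply (passive_in_fold_lower H w (upd z w t1) (upd z w t2)); auto.
  - intros x Hx; rewrite !upd_neq; auto.
  - rewrite !upd_eq; exact Hle.
Qed.

Lemma verts_remove_vertex G v :
  verts (remove_vertex G v) = filter (fun x => negb (x =? v)) (verts G).
Proof.
  unfold verts; simpl. induction (events G) as [|[x|x] l IH]; simpl; auto.
  all: destruct (x =? v); simpl; rewrite ?IH; reflexivity.
Qed.

Lemma candidates_remove_vertex G v s w : w <> v ->
  candidates (remove_vertex G v) s w = filter (fun x => negb (x =? v)) (candidates G s w).
Proof.
  intros Hw. apply Nat.eqb_neq in Hw.
  unfold candidates; rewrite verts_remove_vertex; simpl; rewrite Hw; simpl.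
  induction (verts G) as [|x l IH]; simpl; auto.
  destruct (x =? v) eqn:Ex; simpl; destruct (adj G w x), (matched s x); simpl;
    rewrite ?Ex, ?IH; reflexivity.
Qed.

Lemma ranking_step_remove_vertex_self G v y s e :
  e = Arr v \/ e = Dl v -> ranking_step (remove_vertex G v) y s e = s.
Proof.
  intros [->| ->]; [reflexivity|]. rewrite ranking_step_Dl.
  replace (candidates (remove_vertex G v) s v) with (@nil nat).
  { destruct (matched s v); reflexivity. }
  unfold candidates; simpl; rewrite Nat.eqb_refl.
  rewrite (filter_ext _ (fun _ => false)); [symmetry; apply filter_false|].
  intros x; rewrite andb_false_r; reflexivity.
Qed.

(* The events of [v], filtered out of [G - v], are no-ops there anyway. *)
Lemma ranking_remove_vertex G v y :
  ranking (remove_vertex G v) y = fold_left (ranking_step (remove_vertex G v) y) (events G) [].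
Proof.
  unfold ranking; simpl. generalize (@nil (nat * nat)).
  induction (events G) as [|e l IH]; simpl; intros s; auto.
  destruct (negb (event_eqb e (Arr v)) && negb (event_eqb e (Dl v))) eqn:He; simpl; auto.
  rewrite ranking_step_remove_vertex_self; auto.
  destruct e as [x|x]; simpl in He; destruct (x =? v) eqn:Ex; simpl in He; try discriminate;
    apply Nat.eqb_eq in Ex; subst; auto.
Qed.

Lemma argmin_candidates_remove_vertex G v s x y z :
  x <> v -> (forall w, w <> v -> y w = z w) ->
  argmin y (candidates G s x) = Some v \/
  argmin y (candidates G s x) = argmin z (candidates (remove_vertex G v) s x).
Proof.
  intros Hxv Hoff. rewrite candidates_remove_vertex by exact Hxv.
  destruct (argmin_filter_neq v y (candidates G s x)) as [E|E]; [left; exact E|right].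
  rewrite E; apply argmin_ext; intros w Hw.
  apply filter_In in Hw as [_ Hw]; apply negb_true_iff, Nat.eqb_neq in Hw; auto.
Qed.

Lemma ranking_step_remove_vertex G v s x y z :
  x <> v -> (forall w, w <> v -> y w = z w) -> argmin y (candidates G s x) <> Some v ->
  ranking_step G y s (Dl x) = ranking_step (remove_vertex G v) z s (Dl x).
Proof.
  intros Hxv Hoff Hy. rewrite !ranking_step_Dl.
  destruct (argmin_candidates_remove_vertex G v s x y z Hxv Hoff) as [E|E]; [congruence|].
  rewrite E; reflexivity.
Qed.

Lemma matched_ranking_step_Dl G y s x w :
  matched s w = false -> x <> w -> argmin y (candidates G s x) <> Some w ->
  matched (ranking_step G y s (Dl x)) w = false.
Proof.
  intros Hw Hxw Hy. rewrite ranking_step_Dl.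
  destruct (matched s x); [exact Hw|].
  destruct (argmin y (candidates G s x)) as [q|]; [|exact Hw].
  unfold matched; rewrite existsb_app; fold (matched s w); rewrite Hw; simpl.
  apply Nat.eqb_neq in Hxw; rewrite Hxw.
  replace (q =? w) with false by (symmetry; apply Nat.eqb_neq; congruence).
  reflexivity.
Qed.

Section Ranking.

Variable G : instance.
Hypothesis adj_sym : forall a b, adj G a b = adj G b a.
Hypothesis adj_irrefl : forall a, adj G a a = false.
Hypothesis adj_vertex : forall a b, adj G a b = true -> is_vertex G a.

Definition out_of_reach (s : list (nat * nat)) (v : nat) : Prop :=
  ~ passive_in s v /\ (matched s v = true \/ forall x, adj G v x = true -> matched s x = true).

Lemma out_of_reach_step y s e v :
  out_of_reach s v -> out_of_reach (ranking_step G y s e) v.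
Proof.
  intros [Hnp Hv]. destruct e as [w|w]; [split; auto|].
  rewrite ranking_step_Dl. destruct (matched s w) eqn:Hw; [split; auto|].
  destruct (argmin y (candidates G s w)) as [z|] eqn:Hz; [|split; auto].
  apply argmin_In, candidates_spec in Hz as (_ & Hwz & Hz).
  assert (z <> v).
  { intros ->. destruct Hv as [Hv|Hv]; [congruence|].
    rewrite adj_sym in Hwz. rewrite (Hv w Hwz) in Hw; discriminate. }
  split.
  - intros [c Hc]; apply in_app_or in Hc as [Hc|[Hc|[]]]; [apply Hnp; exists c; exact Hc|].
    injection Hc; auto.
  - destruct Hv as [Hv|Hv]; [left; apply matched_app, Hv|right; intros x Hx; apply matched_app; auto].
Qed.

Lemma out_of_reach_fold y l s v :
  out_of_reach s v -> out_of_reach (fold_left (ranking_step G y) l s) v.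
Proof.
  revert s; induction l as [|e l IH]; simpl; intros s H; auto.
  apply IH, out_of_reach_step, H.
Qed.

Lemma verts_In x : is_vertex G x -> In x (verts G).
Proof.
  intros H; apply in_flat_map; exists (Arr x); simpl; auto.
Qed.

Lemma out_of_reach_deadline y s v :
  matched s v = false -> out_of_reach (ranking_step G y s (Dl v)) v.
Proof.
  intros Hm. assert (Hnp : ~ passive_in s v).
  { intros [c Hc]. rewrite (matched_passive_in _ _ _ Hc) in Hm; discriminate. }
  rewrite ranking_step_Dl, Hm.
  destruct (argmin y (candidates G s v)) as [z|] eqn:Hz.
  - apply argmin_In, candidates_spec in Hz as (_ & Hvz & _).
    assert (z <> v) by (intros ->; rewrite adj_irrefl in Hvz; discriminate).
    split.
    + intros [c Hc]; apply in_app_or in Hc as [Hc|[Hc|[]]]; [apply Hnp; exists c; exact Hc|].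
      injection Hc; auto.
    + left. unfold matched; rewrite existsb_app; simpl; rewrite Nat.eqb_refl; apply orb_true_r.
  - apply argmin_None in Hz. split; [exact Hnp|right].
    intros x Hx. destruct (matched s x) eqn:E; auto. exfalso.
    assert (Hin : In x (candidates G s v)).
    { apply candidates_spec; repeat split; auto.
      apply verts_In, (adj_vertex x v); rewrite adj_sym; exact Hx. }
    rewrite Hz in Hin; destruct Hin.
Qed.

Lemma not_passive_after_deadline y l s v :
  matched s v = false ->
  ~ passive_in (fold_left (ranking_step G y) l (ranking_step G y s (Dl v))) v.
Proof.
  intros Hm; apply out_of_reach_fold, out_of_reach_deadline, Hm.
Qed.

Section Coupling.

Variables (u v : nat) (ya yb za zb : nat -> R).
Hypothesis u_neq_v : u <> v.
Hypothesis ya_yb : forall x, x <> u -> ya x = yb x.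
Hypothesis ya_za : forall x, x <> v -> ya x = za x.
Hypothesis yb_zb : forall x, x <> v -> yb x = zb x.

(* While [v] is unmatched, Ranking on [G] with ranks [ya] makes the same choices as on
   [G - v] with ranks [za], unless it chooses [v]; so if [u] is never chosen in [G - v],
   the choices in [G] do not depend on the rank of [u]. *)
Lemma passive_in_coupled l s :
  matched s v = false ->
  ~ passive_in (fold_left (ranking_step (remove_vertex G v) za) l s) u ->
  ~ passive_in (fold_left (ranking_step (remove_vertex G v) zb) l s) u ->
  passive_in (fold_left (ranking_step G ya) l s) v <->
  passive_in (fold_left (ranking_step G yb) l s) v.
Proof.
  revert s; induction l as [|[x|x] l IH]; cbn [fold_left]; intros s Hv Ha Hb; [tauto|auto|].
  destruct (Nat.eq_dec x v) as [->|Hxv].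
  { split; intros Hp; exfalso; eapply not_passive_after_deadline; eauto. }
  destruct (matched s x) eqn:Hx.
  { rewrite !ranking_step_Dl, Hx in *; auto. }
  set (L := candidates G s x).
  assert (Ca := argmin_candidates_remove_vertex G v s x ya za Hxv ya_za).
  assert (Cb := argmin_candidates_remove_vertex G v s x yb zb Hxv yb_zb).
  fold L in Ca, Cb.
  assert (Nua : argmin ya L <> Some u).
  { destruct Ca as [-> | ->]; [intros E; injection E; auto|].
    intros E; exact (Ha (passive_in_fold_chosen _ _ _ _ _ _ Hx E)). }
  assert (Nub : argmin yb L <> Some u).
  { destruct Cb as [-> | ->]; [intros E; injection E; auto|].
    intros E; exact (Hb (passive_in_fold_chosen _ _ _ _ _ _ Hx E)). }
  assert (Q : argmin ya L = argmin yb L) by exact (argmin_agree_off u ya yb L ya_yb Nua Nub).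
  destruct (classic (argmin ya L = Some v)) as [Ev|Nv].
  { split; intros _; apply passive_in_fold_chosen; fold L; congruence. }
  assert (Sab : ranking_step G ya s (Dl x) = ranking_step G yb s (Dl x))
    by (rewrite !ranking_step_Dl; fold L; rewrite Q; reflexivity).
  assert (Sa : ranking_step G ya s (Dl x) = ranking_step (remove_vertex G v) za s (Dl x))
    by (apply ranking_step_remove_vertex; auto).
  assert (Sb : ranking_step G yb s (Dl x) = ranking_step (remove_vertex G v) zb s (Dl x))
    by (apply ranking_step_remove_vertex; auto; fold L; congruence).
  rewrite <- Sab; apply IH.
  - apply matched_ranking_step_Dl; auto.
  - rewrite Sa; exact Ha.
  - rewrite Sab, Sb; exact Hb.
Qed.

End Coupling.

End Ranking.

Lemma passive_at_minus_below H z w th t :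
  passive_at_minus H z w th -> t < th -> passive H (upd z w t) w.
Proof.
  intros (eps & Heps & Hp) Ht.
  apply (passive_upd_le H z w (Rmax t (th - eps / 2))); [apply Hp|apply Rmax_l].
  split; [apply Rlt_le_trans with (th - eps / 2); [lra|apply Rmax_r]|].
  apply Rmax_lub_lt; lra.
Qed.

Lemma passive_at_minus_of_passive H z w a :
  passive H (upd z w a) w -> passive_at_minus H z w a.
Proof.
  intros Hp; exists 1; split; [lra|]. intros t Ht; apply (passive_upd_le H z w a); [exact Hp|lra].
Qed.

Lemma marginal_rank_bounds H z w th : is_marginal_rank H z w th -> 0 <= th <= 1.
Proof. intros [[Hth _]|[_ ->]]; lra. Qed.

(* The marginal rank is the supremum of the [th] in [0, 1] with [w] passive at [th^-];
   by monotonicity in the rank of [w], this supremum is attained. *)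
Lemma marginal_rank_exists H z w : exists th, is_marginal_rank H z w th.
Proof.
  set (S := fun th => 0 <= th <= 1 /\ passive_at_minus H z w th).
  destruct (classic (exists th, S th)) as [Hex|Hnone].
  2: { exists 0; right; split; [|reflexivity]. intros th Hth Hp; apply Hnone; exists th; split; auto. }
  assert (Hbound : bound S) by (exists 1; intros x [Hx _]; lra).
  destruct (completeness S Hbound Hex) as [m [Hub Hlub]].
  destruct Hex as [th0 Hth0].
  assert (m <= 1) by (apply Hlub; intros x [Hx _]; lra).
  assert (th0 <= m) by (apply Hub, Hth0).
  exists m; left; split; [destruct Hth0; lra|split].
  - exists 1; split; [lra|]; intros t Ht.
    destruct (classic (exists th, S th /\ t < th)) as [(th & [_ Hth] & Htth)|Hn].
    + exact (passive_at_minus_below H z w th t Hth Htth).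
    + exfalso; enough (m <= t) by lra.
      apply Hlub; intros x Hx; apply Rnot_lt_le; intros Htx; apply Hn; exists x; auto.
  - intros th Hth Hp; apply Hub; split; assumption.
Qed.

Lemma marginal_rank_ext H z1 z2 w th :
  (forall t, passive H (upd z1 w t) w <-> passive H (upd z2 w t) w) ->
  is_marginal_rank H z1 w th -> is_marginal_rank H z2 w th.
Proof.
  intros Heq.
  assert (Hp : forall x, passive_at_minus H z1 w x <-> passive_at_minus H z2 w x).
  { intros x; split; intros (eps & Heps & Hq); exists eps; split; auto;
      intros t Ht; apply Heq; auto. }
  intros [(Hth & Hm & Hmax)|[Hnone ->]].
  - left; split; [exact Hth|split; [apply Hp, Hm|]].
    intros x Hx Hx'; apply Hmax, Hp; assumption.
  - right; split; [|reflexivity]. intros x Hx Hx'; apply (Hnone x Hx), Hp, Hx'.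
Qed.

Lemma not_passive_above_marginal_rank H z w tau a :
  is_marginal_rank H z w tau -> tau < a <= 1 -> ~ passive H (upd z w a) w.
Proof.
  intros Htau Ha Hp. apply passive_at_minus_of_passive in Hp.
  pose proof (marginal_rank_bounds _ _ _ _ Htau).
  destruct Htau as [(_ & _ & Hmax)|[Hnone _]].
  - enough (a <= tau) by lra. apply Hmax; [lra|exact Hp].
  - apply (Hnone a); [lra|exact Hp].
Qed.

Theorem mainTheorem10 (G : instance) (u v : nat) (y : nat -> R) (tau : R) :
  valid_instance G ->
  bipartite G ->
  adj G u v = true ->
  before G (Dl u) (Dl v) ->
  (forall x, is_vertex G x -> x <> u -> x <> v -> 0 <= y x < 1) ->
  is_marginal_rank (remove_vertex G v) y u tau ->
  exists theta, 0 <= theta <= 1 /\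
    forall yu, 0 <= yu <= 1 -> tau < yu ->
      is_marginal_rank G (upd y u yu) v theta.
Proof.
  intros (_ & _ & _ & Hsym & Hirr & Hvert & _) _ Huv _ _ Htau.
  assert (Nuv : u <> v) by (intros ->; rewrite Hirr in Huv; discriminate).
  assert (Hsame : forall a b t, tau < a <= 1 -> tau < b <= 1 ->
            passive G (upd (upd y u a) v t) v <-> passive G (upd (upd y u b) v t) v).
  { intros a b t Ha Hb.
    apply (passive_in_coupled G Hsym Hirr Hvert u v _ _ (upd y u a) (upd y u b) Nuv).
    - intros x Hx; unfold upd; destruct (x =? v); [reflexivity|].
      apply Nat.eqb_neq in Hx; rewrite Hx; reflexivity.
    - intros x Hx; apply upd_neq, Hx.
    - intros x Hx; apply upd_neq, Hx.
    - reflexivity.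
    - rewrite <- ranking_remove_vertex; exact (not_passive_above_marginal_rank _ _ _ _ _ Htau Ha).
    - rewrite <- ranking_remove_vertex; exact (not_passive_above_marginal_rank _ _ _ _ _ Htau Hb). }
  destruct (Rlt_or_le tau 1) as [Hlt|Hge].
  - destruct (marginal_rank_exists G (upd y u 1) v) as [theta Htheta].
    exists theta; split; [exact (marginal_rank_bounds _ _ _ _ Htheta)|].
    intros yu Hyu Htyu; apply (marginal_rank_ext G (upd y u 1)); [|exact Htheta].
    intros t; apply Hsame; lra.
  - exists 0; split; [lra|]. intros; lra.
Qed.
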